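(* Let $n,s$ be integers with $s \geq n > 0$. Let $Z_1^s,\dots,Z_n^s$ be independent random variables, each geometrically distributed with parameter $1/s$ on $\{1,2,3,\dots\}$ (i.e. $\mathbb{P}(Z_i^s=m)=(1-1/s)^{m-1}(1/s)$ for $m\ge 1$), and let $Y_n^s = \max_{1\le i\leq n} Z_i^s$. Then (1) if $n$ is even, $\mathbb{E}(Y_n^{s}) \leq \frac{n}{2}\cdot \frac{3s^2-2s}{2s-1}$; (2) if $n$ is odd, $\mathbb{E}(Y_n^{s}) \leq \frac{n}{2}\cdot \frac{3s^2-2s}{2s-1} + s$. *)

From HB Require Import structures.
From mathcomp Require Import all_boot all_order all_algebra.
From mathcomp Require Import all_classical all_reals.
From mathcomp Require Import ereal esum.
Set Implicit Arguments. Unset Strict Implicit. Unset Printing Implicit Defensive.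
Import Order.TTheory GRing.Theory Num.Theory.
Local Open Scope ring_scope.

Definition geom_pmf (R : realType) (p : R) (m : nat) : R :=
  if (0 < m)%N then (1 - p) ^+ m.-1 * p else 0.

Definition geom_joint_pmf (R : realType) (n : nat) (p : R)
  (z : {ffun 'I_n -> nat}) : R :=
  \prod_(i < n) geom_pmf p (z i).

Definition Ymax (n : nat) (z : {ffun 'I_n -> nat}) : nat := \max_(i < n) z i.

(* E(Y_n) for independent geometric(p) Z_i: the (nonnegative, hence
   well-defined in [0,+oo]) sum over all outcomes of Y times the joint pmf. *)
Definition E_max_geom (R : realType) (n : nat) (p : R) : \bar R :=
  (\esum_(z in [set: {ffun 'I_n -> nat}])
     ((Ymax z)%:R * geom_joint_pmf p z)%:E)%classic.

From HB Require Import structures.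
From mathcomp Require Import all_boot all_order all_algebra.
From mathcomp Require Import all_classical all_reals.
From mathcomp Require Import ereal esum.
From mathcomp Require Import ring lra zify.
Set Implicit Arguments. Unset Strict Implicit. Unset Printing Implicit Defensive.
Import Order.TTheory GRing.Theory Num.Theory.
Local Open Scope ring_scope.

(* Since P(Z_i <= m) = 1 - q^m with q = 1 - p, the tail-sum formula gives
   E(Y) = sum_(m >= 0) (1 - (1 - q^m)^n).  Grouping the factors of (1 - x)^n in
   pairs, each pair (1 - x)^2 = 1 - (2x - x^2) costs at most 2x - x^2, whence
   1 - (1 - x)^n <= (n/2)(2x - x^2) + [n odd] x on [0, 1].  Summing over x = q^m,
   sum_m q^m = 1/p = s and sum_m (2q^m - q^(2m)) = 2s - s^2/(2s - 1), which is
   (3s^2 - 2s)/(2s - 1).  The expectation is an esum over all outcomes, so the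
   computation is carried out on the finite boxes {0..N}^n, which contain every
   finite set of outcomes, and the geometric sums are truncated accordingly. *)

Lemma sum_expr_closed (F : fieldType) (q : F) N :
  q != 1 -> \sum_(m < N) q ^+ m = (1 - q ^+ N) / (1 - q).
Proof.
move=> q1; have d : 1 - q != 0 by rewrite subr_eq0 eq_sym.
by apply: (mulfI d); rewrite mulrCA mulfV // mulr1 -opprB mulNr -subrX1 opprB.
Qed.

Section ElementaryBounds.
Variable R : realFieldType.
Implicit Types x q : R.

Lemma one_sub_expr_double_le x k : 0 <= x <= 1 ->
  1 - (1 - x) ^+ k.*2 <= k%:R * (2 * x - x ^+ 2).
Proof.
move=> /andP[x0 x1]; elim: k => [|k IH]; first by rewrite expr0 subrr mul0r.
have a0 : 0 <= (1 - x) ^+ k.*2 by apply: exprn_ge0; lra.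
have a1 : (1 - x) ^+ k.*2 <= 1 by apply: exprn_ile1; lra.
rewrite doubleS 2!exprS -natr1.
move: a0 a1 IH; set a := (1 - x) ^+ k.*2 => a0 a1 IH.
have : 0 <= (1 - a) * (2 * x - x ^+ 2) by apply: mulr_ge0; rewrite ?expr2; nra.
rewrite expr2 in IH *; nra.
Qed.

Lemma one_sub_expr_le x n : 0 <= x <= 1 ->
  1 - (1 - x) ^+ n <= n%:R / 2 * (2 * x - x ^+ 2) + (odd n)%:R * x.
Proof.
move=> x01; have /andP[x0 x1] := x01.
have -> : (1 - x) ^+ n = (1 - x) ^+ odd n * (1 - x) ^+ (n./2).*2.
  by rewrite -exprD odd_double_half.
have -> : n%:R / 2 = (odd n)%:R / 2 + (n./2)%:R :> R.
  by rewrite -{1}(odd_double_half n) natrD -muln2 natrM mulrDl mulfK ?pnatr_eq0.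
have := one_sub_expr_double_le n./2 x01.
have : 0 <= (1 - x) ^+ (n./2).*2 <= 1 by rewrite exprn_ge0 ?exprn_ile1 //; lra.
set a := (1 - x) ^+ _; set y := _ * (2 * x - _).
have xx : x ^+ 2 <= x by rewrite expr2 ler_piMl.
rewrite [(_ / 2 + _) * _]mulrDl -/y.
case: (odd n) => /=; rewrite ?expr1 ?expr0 ?mul1r ?mul0r ?add0r ?addr0 => /andP[a0 a1] ay.
  have : 0 <= x * (1 - a) by apply: mulr_ge0; lra.
  lra.
lra.
Qed.

Lemma sum_expr_le q N : 0 <= q < 1 -> \sum_(m < N) q ^+ m <= (1 - q)^-1.
Proof.
move=> /andP[q0 q1]; rewrite sum_expr_closed ?lt_eqF // -[leRHS]mul1r.
by rewrite ler_wpM2r ?invr_ge0 ?subr_ge0 ?(ltW q1) // gerBl exprn_ge0.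
Qed.

Lemma sum_twice_expr_sub_sqr_le q N : 0 <= q < 1 ->
  \sum_(m < N) (2 * q ^+ m - (q ^+ m) ^+ 2) <= 2 / (1 - q) - (1 - q ^+ 2)^-1.
Proof.
move=> /andP[q0 q1].
have q2 : q ^+ 2 < 1 by rewrite expr2; nra.
under eq_bigr do rewrite -exprM mulnC exprM.
rewrite sumrB -mulr_sumr !sum_expr_closed ?lt_eqF //.
rewrite exprAC; set t := q ^+ N; set a := (1 - q)^-1; set b := (1 - q ^+ 2)^-1.
have t0 : 0 <= t by exact: exprn_ge0.
have t1 : t <= 1 by rewrite exprn_ile1 // ltW.
have b0 : 0 <= b by rewrite invr_ge0 subr_ge0 ltW.
have ba : b <= a.
  by rewrite lef_pV2 ?posrE ?subr_gt0 // lerD2l lerN2 expr2 ler_piMl // ltW.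
have : t ^+ 2 * b <= t * a.
  by rewrite expr2 -mulrA ler_wpM2l // (le_trans _ ba) // ler_piMl.
nra.
Qed.

End ElementaryBounds.

Definition ffun_val n N (y : {ffun 'I_n -> 'I_N}) : {ffun 'I_n -> nat} :=
  [ffun i => val (y i)].

Section TailSum.
Variable R : comRingType.

Lemma sum_ltn_minn M N : \sum_(m < N) ((m < M)%N%:R : R) = (minn N M)%:R.
Proof.
elim: N => [|N IH]; first by rewrite big_ord0 min0n.
by rewrite big_ord_recr /= IH -natrD; congr (_%:R); case: (ltnP N M); lia.
Qed.

Lemma prod_leq_Ymax n (v : {ffun 'I_n -> nat}) m :
  \prod_(i < n) ((v i <= m)%N%:R : R) = (Ymax v <= m)%N%:R.
Proof.
rewrite -natr_prod; congr (_%:R).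
have [/forallP vle | /forallPn[i vgt]] := boolP [forall i, v i <= m]%N.
  rewrite big1 => [|i _]; last by rewrite vle.
  by apply/esym/eqP; rewrite eqb1; apply/bigmax_leqP => i _; exact: vle.
rewrite (bigD1 i) //= (negbTE vgt) mul0n; apply/esym/eqP; rewrite eqb0 -ltnNge.
by rewrite (leq_trans _ (leq_bigmax i)) // ltnNge.
Qed.

Lemma Ymax_tail_sum n (v : {ffun 'I_n -> nat}) N : (Ymax v <= N)%N ->
  (Ymax v)%:R = \sum_(m < N) (1 - \prod_(i < n) ((v i <= m)%N%:R : R)).
Proof.
move=> YN; rewrite -[in LHS](minn_idPr YN) -sum_ltn_minn.
by apply: eq_bigr => m _; rewrite prod_leq_Ymax ltnNge; case: leqP; rewrite ?subrr ?subr0.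
Qed.

Lemma sum_box_Ymax (g : nat -> R) n N :
  \sum_(y : {ffun 'I_n -> 'I_N.+1}) (Ymax (ffun_val y))%:R * \prod_(i < n) g (y i) =
  \sum_(m < N) ((\sum_(j < N.+1) g j) ^+ n - (\sum_(j < N.+1) (j <= m)%N%:R * g j) ^+ n).
Proof.
have YN (y : {ffun 'I_n -> 'I_N.+1}) : (Ymax (ffun_val y) <= N)%N.
  by apply/bigmax_leqP => i _; rewrite ffunE -ltnS ltn_ord.
under eq_bigr => y _ do rewrite (Ymax_tail_sum (YN y)) mulr_suml.
rewrite exchange_big /=; apply: eq_bigr => m _.
under eq_bigr => y _ do rewrite mulrBl mul1r -big_split /=.
rewrite sumrB.
under [X in _ - X = _]eq_bigr => y _ do under eq_bigr => i _ do rewrite ffunE.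
rewrite -(bigA_distr_bigA (fun _ (j : 'I_N.+1) => g j)).
rewrite -(bigA_distr_bigA (fun _ (j : 'I_N.+1) => (j <= m)%N%:R * g j)).
by rewrite !prodr_const card_ord.
Qed.

End TailSum.

Lemma esum_le_of_box_sum_le (R : realType) n (f : {ffun 'I_n -> nat} -> R) (B : R) :
  (forall z, 0 <= f z) ->
  (forall N, \sum_(y : {ffun 'I_n -> 'I_N.+1}) f (ffun_val y) <= B) ->
  (\esum_(z in [set: {ffun 'I_n -> nat}]) (f z)%:E <= B%:E)%E.
Proof.
move=> f0 boxB; apply: ge_ereal_sup => _ [X [finX _] <-].
rewrite fsbig_finite //= sumEFin lee_fin.
set r := finmap.enum_fset (fset_set X).
set N := (\max_(z <- r) Ymax z)%N.
have zN z i : z \in r -> (z i <= N)%N.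
  by move=> zr; rewrite (leq_trans (leq_bigmax i)) // (leq_bigmax_seq _ zr).
pose trunc (z : {ffun 'I_n -> nat}) : {ffun 'I_n -> 'I_N.+1} := [ffun i => inord (z i)].
have truncK z : z \in r -> ffun_val (trunc z) = z.
  by move=> zr; apply/ffunP => i; rewrite !ffunE /= inordK // ltnS zN.
have -> : \sum_(z <- r) f z = \sum_(z <- r) f (ffun_val (trunc z)).
  by apply: eq_big_seq => z zr; rewrite truncK.
rewrite -(big_map trunc xpredT (fun y => f (ffun_val y))) big_uniq; last first.
  rewrite map_inj_in_uniq ?finmap.fset_uniq // => z z' zr z'r eqz.
  by rewrite -(truncK z zr) -(truncK z' z'r) eqz.
by apply: le_trans (boxB N); rewrite big_mkcond ler_sum // => y _; case: ifP.
Qed.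

Section Geometric.
Variable R : realType.
Implicit Types p : R.

Lemma geom_pmf_ge0 p j : 0 <= p <= 1 -> 0 <= geom_pmf p j.
Proof.
move=> /andP[p0 p1]; rewrite /geom_pmf; case: ifP => // _.
by rewrite mulr_ge0 // exprn_ge0 // subr_ge0.
Qed.

Lemma sum_geom_pmf p k : \sum_(j < k.+1) geom_pmf p j = 1 - (1 - p) ^+ k.
Proof.
elim: k => [|k IH]; first by rewrite big_ord1 /geom_pmf /= expr0 subrr.
by rewrite big_ord_recr /= IH /geom_pmf /= exprSr; ring.
Qed.

Lemma sum_geom_pmf_leq p m N : (m <= N)%N ->
  \sum_(j < N.+1) (j <= m)%N%:R * geom_pmf p j = 1 - (1 - p) ^+ m.
Proof.
move=> mN; rewrite -sum_geom_pmf (big_ord_widen_cond N.+1 xpredT) //.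
rewrite [RHS]big_mkcond; apply: eq_bigr => j _.
by rewrite ltnS; case: leqP; rewrite ?mul1r ?mul0r.
Qed.

Lemma box_sum_Ymax_geom_le p n N : 0 < p <= 1 ->
  \sum_(y : {ffun 'I_n -> 'I_N.+1}) (Ymax (ffun_val y))%:R * geom_joint_pmf p (ffun_val y)
  <= n%:R / 2 * (2 / p - (1 - (1 - p) ^+ 2)^-1) + (odd n)%:R / p.
Proof.
move=> /andP[p0 p1]; set q := 1 - p.
have q01 : 0 <= q < 1 by apply/andP; split; rewrite /q; lra.
have powq01 k : 0 <= q ^+ k <= 1 by rewrite exprn_ge0 ?exprn_ile1 //; lra.
have joint_val (y : {ffun 'I_n -> 'I_N.+1}) :
    geom_joint_pmf p (ffun_val y) = \prod_(i < n) geom_pmf p (y i).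
  by apply: eq_bigr => i _; rewrite ffunE.
under eq_bigr do rewrite joint_val.
rewrite sum_box_Ymax sum_geom_pmf.
under eq_bigr => m _ do rewrite sum_geom_pmf_leq 1?ltnW //.
have -> : p = 1 - q by rewrite subKr.
rewrite -/q; apply: (@le_trans _ _ (\sum_(m < N)
  (n%:R / 2 * (2 * q ^+ m - (q ^+ m) ^+ 2) + (odd n)%:R * q ^+ m))).
  apply: ler_sum => m _; have := one_sub_expr_le n (powq01 m); rewrite subKr.
  have /andP[qN0 qN1] := powq01 N.
  have : (1 - q ^+ N) ^+ n <= 1 by rewrite exprn_ile1 //; lra.
  lra.
rewrite big_split /= -!mulr_sumr lerD // ler_wpM2l //.
  exact: sum_twice_expr_sub_sqr_le.
exact: sum_expr_le.
Qed.

Lemma E_max_geom_le p n : 0 < p <= 1 ->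
  (E_max_geom n p <=
     (n%:R / 2 * (2 / p - (1 - (1 - p) ^+ 2)^-1) + (odd n)%:R / p)%:E)%E.
Proof.
move=> p01; have /andP[p0 p1] := p01.
apply: esum_le_of_box_sum_le => [z|N]; last exact: box_sum_Ymax_geom_le.
rewrite mulr_ge0 ?ler0n // prodr_ge0 // => i _.
by rewrite geom_pmf_ge0 // ltW.
Qed.

End Geometric.

Theorem proposition5p1 (R : realType) (n s : nat) (hn : (0 < n)%N) (hsn : (n <= s)%N) :
  (~~ odd n ->
     (E_max_geom n (s%:R^-1 : R) <=
        ((n%:R / 2) * ((3 * s%:R ^+ 2 - 2 * s%:R) / (2 * s%:R - 1)))%:E)%E) /\
  (odd n ->
     (E_max_geom n (s%:R^-1 : R) <=
        ((n%:R / 2) * ((3 * s%:R ^+ 2 - 2 * s%:R) / (2 * s%:R - 1)) + s%:R)%:E)%E).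
Proof.
have s1 : (1 <= s%:R :> R) by rewrite ler1n (leq_trans hn hsn).
have p01 : 0 < (s%:R^-1 : R) <= 1 by rewrite invr_gt0 invf_le1; lra.
have := E_max_geom_le n p01.
have -> : 2 / s%:R^-1 - (1 - (1 - s%:R^-1) ^+ 2)^-1 =
          (3 * s%:R ^+ 2 - 2 * s%:R) / (2 * s%:R - 1) :> R.
  by field; apply/andP; split; apply/eqP; lra.
rewrite invrK => E_le.
by split=> [/negbTE|] odd_n; rewrite odd_n ?mul0r ?addr0 ?mul1r in E_le.
Qed.
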